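(* Let $G$ be a finite group, $p$ a prime, $k$ a $p$-adic field, and $G_1\le G$ a subgroup containing a $p$-Sylow subgroup of $G$ which is realizable over $k$. Let $l/k$ be a finite extension with $\gcd([l:k],p)=1$. Then there is a subgroup $G_2\le G_1$ which contains a $p$-Sylow subgroup of $G$ and is realizable over $l$.
   Context: A $p$-adic field is a finite extension of $\mathbb{Q}_p$. A finite group is realizable over a field $F$ if it is isomorphic to the Galois group of some Galois extension of $F$. *)

From HB Require Import structures.
From mathcomp Require Import all_boot all_order all_algebra all_fingroup all_solvable all_field.
Set Implicit Arguments. Unset Strict Implicit. Unset Printing Implicit Defensive.
Import Order.TTheory GRing.Theory Num.Theory.
Local Open Scope ring_scope.

(* p-adic absolute value on rat: |q|_p = p^(-v_p(q)), |0|_p = 0. *)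
Definition padic_abs (p : nat) (q : rat) : rat :=
  if q == 0 then 0
  else (p%:R ^+ logn p (absz (denq q))) / (p%:R ^+ logn p (absz (numq q))).

(* K (with embedding emb of Q and norm nrm) is the completion of Q with
   respect to the p-adic absolute value, i.e. K is (a model of) Q_p.
   The norm takes values in p^Z u {0} (a subset of Q), so rat values suffice. *)
Record is_Qp (p : nat) (K : fieldType) := IsQp {
  Qp_emb : {rmorphism rat -> K};
  Qp_nrm : K -> rat;
  Qp_nrm_ge0 : forall x, 0 <= Qp_nrm x;
  Qp_nrm_eq0 : forall x, (Qp_nrm x == 0) = (x == 0);
  Qp_nrmM : forall x y, Qp_nrm (x * y) = Qp_nrm x * Qp_nrm y;
  Qp_nrmD : forall x y, Qp_nrm (x + y) <= Num.max (Qp_nrm x) (Qp_nrm y);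
  Qp_nrm_emb : forall q, Qp_nrm (Qp_emb q) = padic_abs p q;
  Qp_dense : forall x (e : rat), 0 < e -> exists q, Qp_nrm (x - Qp_emb q) < e;
  Qp_complete : forall u : nat -> K,
    (forall e : rat, 0 < e -> exists N, forall m n, (N <= m)%N -> (N <= n)%N ->
        Qp_nrm (u m - u n) < e) ->
    exists x, forall e : rat, 0 < e -> exists N, forall n, (N <= n)%N ->
        Qp_nrm (u n - x) < e
}.

Definition realizable (F : fieldType) (gT : finGroupType) (H : {set gT}) : Prop :=
  exists M : splittingFieldType F,
    galois 1%AS {:M} /\ (H \isog 'Gal({:M} / 1%AS))%g.

Definition contains_sylow (gT : finGroupType) (p : nat) (G H : {set gT}) : Prop :=
  exists P : {group gT}, (p.-Sylow(G) P && (P \subset H))%g.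

From HB Require Import structures.
From mathcomp Require Import all_boot all_order all_algebra all_fingroup all_solvable all_field.
From Stdlib Require Import Classical.
Set Implicit Arguments. Unset Strict Implicit. Unset Printing Implicit Defensive.
Import GRing.Theory.
Local Open Scope ring_scope.

(* Let M/k be Galois with group G1 and write M = k(th), with minimal polynomial
   f over k.  Adjoin to l a root z of an irreducible factor of f, getting
   L = l(z).  Sending th to z embeds M into L over k; as M/k is normal, f splits
   in L, so L/l is the splitting field of the separable polynomial f and is
   Galois.  Restricting along the embedding injects Gal(L/l) into
   Gal(M/k) ~ G1; let G2 be the image.  Since M embeds into L over k,
   [M:k] = |G1| divides [L:k] = |G2| [l:k], and [l:k] is prime to p, so the
   p-part of |G|, which divides |G1|, divides |G2|: G2 contains a Sylow
   p-subgroup of G.  Nothing p-adic is used. *)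

Lemma irredp_factor_exists (F : fieldType) (p : {poly F}) :
  (1 < size p)%N -> exists2 q : {poly F}, irreducible_poly q & q %| p.
Proof.
have [n] := ubnP (size p); elim: n p => // n IHn p /ltnSE le_p_n p_gt1.
apply: NNPP => no_factor; apply: (no_factor); exists p => //.
split=> // q q_neq1 dv_qp; apply: contraT => not_eqp; case: no_factor.
have p_neq0 : p != 0 by rewrite -size_poly_gt0 ltnW.
have q_neq0 : q != 0 by apply: contraNneq p_neq0 => q0; rewrite -dvd0p -q0.
have q_gt1 : (1 < size q)%N by rewrite ltn_neqAle eq_sym q_neq1 size_poly_gt0.
have lt_qp : (size q < size p)%N.
  by rewrite ltn_neqAle dvdp_leq // andbT (dvdp_size_eqp dv_qp).
have [r irr_r dv_rq] := IHn q (leq_trans lt_qp le_p_n) q_gt1.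
by exists r; last exact: dvdp_trans dv_qp.
Qed.

Section AdjoinEmbedding.

Variables (k : fieldType) (M : fieldExtType k) (th : M).
Hypothesis genM : <<1; th>>%VS = fullv.

Lemma adjoin_horner (x : M) : exists q : {poly k}, x = (map_poly (in_alg M) q).[th].
Proof. by apply/Fadjoin1_polyP; rewrite genM memvf. Qed.

Lemma adjoin_rmorph_eq (R : nzRingType) (f g : {rmorphism M -> R}) :
  f \o in_alg M =1 g \o in_alg M -> f th = g th -> f =1 g.
Proof.
move=> fg_alg fg_th x; have [q ->] := adjoin_horner x.
rewrite -!horner_map -!map_poly_comp fg_th; congr _.[_].
exact: eq_map_poly.
Qed.

Variables (f : {poly k}) (R : comNzRingType) (iota : {rmorphism k -> R}) (z : R).
Hypotheses (fM : minPoly 1 th = map_poly (in_alg M) f)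
           (fz : root (map_poly iota f) z).

Let ev_comm : commr_rmorph iota z := fun _ => mulrC _ _.
Local Notation ev := (horner_morph ev_comm).

Let ev_root_eq0 q : root (map_poly (in_alg M) q) th -> ev q = 0.
Proof.
move=> qth; have := minPoly_dvdp (alg_polyOver 1 q) qth.
rewrite fM dvdp_map => /dvdpP[e ->].
by rewrite rmorphM /= [ev f](rootP fz) mulr0.
Qed.

Definition adjoin_emb (x : M) : R :=
  ev (sval (sig_eqW (adjoin_horner x))).

Lemma adjoin_embE q : adjoin_emb (map_poly (in_alg M) q).[th] = ev q.
Proof.
rewrite /adjoin_emb; case: sig_eqW => q' /= eq_qq'.
apply/eqP; rewrite -subr_eq0 -rmorphB; apply/eqP/ev_root_eq0.
by rewrite /root rmorphB hornerD hornerN -eq_qq' subrr.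
Qed.

Fact adjoin_emb_is_zmod_morphism : zmod_morphism adjoin_emb.
Proof.
move=> x y; have [q ->] := adjoin_horner x; have [q' ->] := adjoin_horner y.
by rewrite -hornerN -hornerD -rmorphB !adjoin_embE rmorphB.
Qed.

Fact adjoin_emb_is_monoid_morphism : monoid_morphism adjoin_emb.
Proof.
split=> [|x y]; last first.
  have [q ->] := adjoin_horner x; have [q' ->] := adjoin_horner y.
  by rewrite -hornerM -rmorphM !adjoin_embE rmorphM.
have -> : 1 = (map_poly (in_alg M) 1).[th] by rewrite rmorph1 hornerC.
by rewrite adjoin_embE rmorph1.
Qed.

HB.instance Definition _ :=
  GRing.isZmodMorphism.Build M R adjoin_emb adjoin_emb_is_zmod_morphism.
HB.instance Definition _ :=
  GRing.isMonoidMorphism.Build M R adjoin_emb adjoin_emb_is_monoid_morphism.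

Lemma adjoin_rmorph_exists :
  exists2 rho : {rmorphism M -> R}, rho \o in_alg M =1 iota & rho th = z.
Proof.
exists adjoin_emb => [c|] /=.
  by rewrite -[c%:A](hornerC _ th) -(map_polyC (in_alg M)) adjoin_embE horner_morphC.
by rewrite -[th in LHS](hornerX th) -(map_polyX (in_alg M)) adjoin_embE horner_morphX.
Qed.

End AdjoinEmbedding.

Lemma dim_dvd_of_rmorph (k : fieldType) (M K : fieldExtType k)
    (rho : {rmorphism M -> K}) :
  rho \o in_alg M =1 in_alg K -> (\dim {:M} %| \dim {:K})%N.
Proof.
move=> rho_alg.
have rho_scalable : scalable rho.
  by move=> a x; rewrite -mulr_algl rmorphM [rho a%:A]rho_alg mulr_algl.
pose rhoL : {lrmorphism M -> K} :=
  HB.pack (rho : M -> K) rho (GRing.isScalable.Build k M K *:%R rho rho_scalable).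
have := field_dimS (subvf (linfun_ahom rhoL @: fullv)%AS).
by rewrite limg_dim_eq // (eqP (AHom_lker0 _)) capv0.
Qed.

Lemma dim_baseField (F0 : fieldType) (F : fieldExtType F0) (L : fieldExtType F) :
  \dim {:baseFieldType L} = (\dim {:L} * \dim {:F})%N.
Proof.
rewrite -dim_baseVspace; congr (\dim _); apply/vspaceP => x.
by rewrite (mem_baseVspace (fullv : {vspace L})) memvf (@memvf _ L).
Qed.

Lemma gal_eq_adjoin (F : fieldType) (E : splittingFieldType F) (a : E) :
  <<1; a>>%VS = fullv -> forall x y : gal_of {:E}, x a = y a -> x = y.
Proof.
move=> genE x y xy_a; apply/eqP/gal_eqP => v _.
by apply: (adjoin_rmorph_eq genE) => // c /=; rewrite !rmorph_alg.
Qed.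

Section RootExtension.

Variables (k : fieldType) (l : fieldExtType k) (M : splittingFieldType k) (th : M).
Hypotheses (genM : <<1; th>>%VS = fullv) (galois_M : galois 1 {:M}).

Section Splitting.

Variables (L : fieldExtType l) (rho : {rmorphism M -> L}) (z : L).
Hypotheses (rho_alg : rho \o in_alg M =1 in_alg L \o in_alg l) (rho_th : rho th = z).
Hypothesis genL : <<1; z>>%VS = fullv.

Lemma map_minPoly_over : map_poly rho (minPoly 1 th) \is a polyOver 1%VS.
Proof.
have /polyOver1P[q ->] := minPolyOver 1 th.
by rewrite -map_poly_comp (eq_map_poly rho_alg) map_poly_comp alg_polyOver.
Qed.

Lemma map_minPoly_split : exists r : seq (gal_of {:M}),
  map_poly rho (minPoly 1 th)
    = \prod_(w <- [seq rho (x th) | x : gal_of {:M} <- r]) ('X - w%:P).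
Proof.
have /and3P[_ _ normM] := galois_M.
have [r _ ->] := elimT (normalField_factors (sub1v _)) normM th (memvf th).
exists r; rewrite rmorph_prod big_map.
by apply: eq_bigr => x _ /=; rewrite map_polyXsubC.
Qed.

Lemma splittingFieldFor_map_minPoly :
  splittingFieldFor 1 (map_poly rho (minPoly 1 th)) fullv.
Proof.
have [r Dp] := map_minPoly_split; exists [seq rho (x th) | x : gal_of {:M} <- r].
  by rewrite Dp eqpxx.
apply/eqP; rewrite eqEsubv subvf /= -genL sub_adjoin1v.
apply: seqv_sub_adjoin; rewrite -root_prod_XsubC -Dp -rho_th.
exact/rmorph_root/root_minPoly.
Qed.

Lemma splitting_field_of_root : splitting_field_axiom L.
Proof.
by exists (map_poly rho (minPoly 1 th));
  [exact: map_minPoly_over | exact: splittingFieldFor_map_minPoly].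
Qed.

End Splitting.

Section Restriction.

Variables (L : splittingFieldType l) (rho : {rmorphism M -> L}) (z : L).
Hypotheses (rho_alg : rho \o in_alg M =1 in_alg L \o in_alg l) (rho_th : rho th = z).
Hypothesis genL : <<1; z>>%VS = fullv.

Lemma galois_root_extension : galois 1 {:L}.
Proof.
apply/splitting_galoisField; exists (map_poly rho (minPoly 1 th)); split.
- exact: map_minPoly_over.
- have /and3P[_ /separableP sepM _] := galois_M.
  by rewrite separable_map; apply: sepM (memvf th).
- exact: (splittingFieldFor_map_minPoly rho_th genL).
Qed.

Lemma gal_restrict_subproof (s : gal_of {:L}) :
  exists t : gal_of {:M}, rho (t th) == s z.
Proof.
have p_z : root (map_poly rho (minPoly 1 th)) z.
  by rewrite -rho_th rmorph_root ?root_minPoly.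
have := rmorph_root s p_z.
rewrite (fixedPoly_gal (sub1v _) _ (map_minPoly_over rho_alg)); last first.
  by rewrite gal_kHom ?sub1v ?k1AHom.
have [r ->] := map_minPoly_split rho.
by rewrite root_prod_XsubC => /mapP[t _ ->]; exists t.
Qed.

Definition gal_restrict (s : gal_of {:L}) : gal_of {:M} :=
  xchoose (gal_restrict_subproof s).

Lemma gal_restrictE s : rho (gal_restrict s th) = s z.
Proof. exact/eqP/(xchooseP (gal_restrict_subproof s)). Qed.

Lemma gal_restrict_comm s : forall x, rho (gal_restrict s x) = s (rho x).
Proof.
apply: (adjoin_rmorph_eq genM (f := rho \o gal_restrict s) (g := s \o rho)).
  by move=> c /=; rewrite rmorph_alg [rho _]rho_alg /= rmorph_alg.
by rewrite /= gal_restrictE rho_th.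
Qed.

Lemma gal_restrictM : {morph gal_restrict : s1 s2 / (s1 * s2)%g}.
Proof.
move=> s1 s2; apply: (gal_eq_adjoin genM); apply: (fmorph_inj rho).
by rewrite gal_restrictE !galM ?memvf // gal_restrict_comm gal_restrictE.
Qed.

Lemma gal_restrict_inj : injective gal_restrict.
Proof.
by move=> s1 s2 eq_s12; apply: (gal_eq_adjoin genL); rewrite -!gal_restrictE eq_s12.
Qed.

Definition gal_restrict_morphism : {morphism 'Gal({:L} / 1)%g >-> gal_of {:M}} :=
  Morphism (in2W gal_restrictM).

Lemma injm_gal_restrict : ('injm gal_restrict_morphism)%g.
Proof. by apply/injmP => s1 s2 _ _; apply: gal_restrict_inj. Qed.

End Restriction.

End RootExtension.

Section GroupFacts.

Local Open Scope group_scope.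

Lemma isog_sub_of_injm (gT hT kT : finGroupType) (G : {group gT}) (H : {group hT})
    (K : {group kT}) (f : {morphism K >-> hT}) :
  G \isog H -> 'injm f -> f @* K \subset H ->
  exists2 G2 : {group gT}, G2 \subset G & G2 \isog K.
Proof.
case/isogP => iso inj_iso im_iso inj_f sfKH.
have sG2G : iso @*^-1 (f @* K) \subset G := subsetIl _ _.
exists (iso @*^-1 (f @* K))%G => //.
apply: isog_trans (sub_isog sG2G inj_iso) _.
have -> : (iso @* (iso @*^-1 (f @* K)))%G = (f @* K)%G.
  by apply: val_inj; rewrite /= morphpreK ?im_iso.
by rewrite isog_sym sub_isog.
Qed.

Lemma contains_sylow_of_dvd (gT : finGroupType) (p : nat) (G H : {group gT}) :
  H \subset G -> (#|G|`_p %| #|H|)%N -> contains_sylow p G H.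
Proof.
move=> sHG dvd_GpH; have [S sylS] := Sylow_exists p H.
exists S; rewrite (pHall_sub sylS) andbT.
have /pHallP[sSH cardS] := sylS; apply/pHallP.
split; first exact: subset_trans sSH sHG.
rewrite cardS; apply/eqP; rewrite eqn_dvd partn_dvd ?cardG_gt0 ?cardSg //=.
by rewrite -{1}(part_pnat_id (part_pnat p #|G|)) partn_dvd.
Qed.

End GroupFacts.

Lemma card_isog_gal (gT : finGroupType) (F : fieldType) (E : splittingFieldType F)
    (H : {group gT}) :
  galois 1 {:E} -> (H \isog 'Gal({:E} / 1))%g -> #|H| = \dim {:E}.
Proof. by move=> galE /card_isog->; rewrite -(galois_dim galE) dimv1 divn1. Qed.

Theorem lemma5p1 (gT : finGroupType) (G G1 : {group gT}) (p : nat)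
  (Qp : fieldType) (Qp_struct : is_Qp p Qp) (k : fieldExtType Qp)
  (l : fieldExtType k) :
  prime p ->
  (G1 \subset G)%g ->
  contains_sylow p G G1 ->
  realizable k G1 ->
  coprime (\dim {:l}) p ->
  exists G2 : {group gT},
    (G2 \subset G1)%g /\ contains_sylow p G G2 /\ realizable l G2.
Proof.
move=> _ sG1G [P /andP[sylP sPG1]] [M [galM isoG1]] coprime_l_p.
pose th := separable_generator 1 {:M}.
have genM : <<1; th>>%VS = fullv.
  by have /and3P[_ sepM _] := galM; rewrite -eq_adjoin_separable_generator ?sub1v.
have /polyOver1P[f fM] := minPolyOver 1 th.
have [g irr_g dv_gf] :
    exists2 g, irreducible_poly g & g %| map_poly (in_alg l) f.
  apply: irredp_factor_exists.
  by rewrite !size_map_poly -(size_map_poly (in_alg M)) -fM size_minPoly.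
have [L0 _ [z g_z genL]] := irredp_FAdjoin irr_g.
have f_z : root (map_poly (in_alg L0 \o in_alg l) f) z.
  by apply: root_dvdp g_z; rewrite map_poly_comp dvdp_map.
have [rho0 rho0_alg rho_th] := adjoin_rmorph_exists genM fM f_z.
pose L : splittingFieldType l := HB.pack L0
  (FieldExt_isSplittingField.Build l L0
     (splitting_field_of_root galM rho0_alg rho_th genL)).
pose rho : {rmorphism M -> L} := rho0.
have rho_alg : rho \o in_alg M =1 in_alg L \o in_alg l := rho0_alg.
have galL := galois_root_extension galM rho_alg rho_th genL.
have [G2 sG2G1 isoG2] :
    exists2 G2 : {group gT}, (G2 \subset G1)%g & (G2 \isog 'Gal({:L} / 1))%g.
  apply: isog_sub_of_injm isoG1 (injm_gal_restrict genM galM rho_alg rho_th genL) _.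
  by apply/subsetP => t _; rewrite gal_kHom ?sub1v ?k1AHom.
exists G2; split=> //; split; last by exists L.
apply: contains_sylow_of_dvd (subset_trans sG2G1 sG1G) _.
(* Over k, the unit embedding of [baseFieldType L] is [in_alg L \o in_alg l]. *)
have := @dim_dvd_of_rmorph _ M (baseFieldType L) rho rho_alg.
rewrite dim_baseField -(card_isog_gal galM isoG1) -(card_isog_gal galL isoG2).
move/(dvdn_trans (cardSg sPG1)); rewrite (card_Hall sylP) Gauss_dvdl //.
by rewrite p_part coprimeXl // coprime_sym.
Qed.
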